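(* Fix an integer $\delta>0$. There is $n(\delta)$ such that for all $n\ge n(\delta)$, among all $n$-vertex graphs with minimum degree at least $\delta$, the unique graph with the most independent sets is $K_{\delta,n-\delta}$.
   Context: Graphs are simple, loopless and finite; the number of independent sets includes the empty set. $K_{a,b}$ is the complete bipartite graph with $a$ vertices in one part and $b$ in the other. *)

From mathcomp Require Import all_boot.
Set Implicit Arguments. Unset Strict Implicit. Unset Printing Implicit Defensive.

Definition simple_graph (T : finType) (e : rel T) : Prop :=
  (forall x y, e x y = e y x) /\ (forall x, ~~ e x x).

Definition degree (T : finType) (e : rel T) (x : T) : nat := #|[set y | e x y]|.

Definition min_degree_ge (T : finType) (e : rel T) (d : nat) : Prop :=
  forall x, d <= degree e x.

Definition independent (T : finType) (e : rel T) (S : {set T}) : bool :=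
  [forall x in S, forall y in S, ~~ e x y].

Definition num_indep (T : finType) (e : rel T) : nat :=
  #|[set S : {set T} | independent e S]|.

(* K_{d, n-d} on vertex set 'I_n : parts {i < d} and {i >= d}. *)
Definition Kbip (n d : nat) : rel 'I_n :=
  fun x y => (x < d) != (y < d).
Arguments Kbip : clear implicits.

Definition graph_iso (T : finType) (e1 e2 : rel T) : Prop :=
  exists f : T -> T, bijective f /\ forall x y, e1 x y = e2 (f x) (f y).

From mathcomp Require Import all_boot zify.
Set Implicit Arguments. Unset Strict Implicit. Unset Printing Implicit Defensive.

(* If 3(δ+1) edges can be peeled off one after another, each removal of both ends
   keeps at most 3/4 of the independent sets relative to 2^|U|, and i(G) < 2^(n-δ).
   Otherwise G has a vertex cover C of size O(δ).  Vertices of degree above |C| + δ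
   ("heavy") lie in C, and all but O(δ²) vertices have only heavy neighbours, so there
   are at least δ heavy vertices.  Counting independent sets by a heavy vertex they
   contain gives i(G) < 2^(n-δ) if there are more than δ of them.  If there are exactly
   δ, forming a set H, an edge outside H again forces i(G) < 2^(n-δ); otherwise every
   vertex outside H is joined to all of H, so i(G) = 2^(n-δ) + i(G[H]) - 1, which is
   largest exactly when H is independent, i.e. when G is K_{δ,n-δ}. *)

Lemma card_bigcup_le (I T : finType) (A : {pred I}) (F : I -> {set T}) :
  #|\bigcup_(i in A) F i| <= \sum_(i in A) #|F i|.
Proof.
apply: (big_ind2 (fun (X : {set T}) k => #|X| <= k)) => //; first by rewrite cards0.
by move=> X1 k1 X2 k2 le1 le2; apply: leq_trans (leq_card_setU X1 X2) (leq_add le1 le2).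
Qed.

Lemma card_eq_set_bij (T : finType) (A A' : {set T}) : #|A| = #|A'| ->
  exists2 f : T -> T, bijective f & forall x, (f x \in A') = (x \in A).
Proof.
(* [s B] lists [T] without repetition, with the elements of [B] in front. *)
pose s (B : {set T}) := enum B ++ enum (~: B).
have uniq_s B : uniq (s B).
  rewrite cat_uniq !enum_uniq andbT /=; apply/hasPn => x.
  by rewrite !mem_enum inE.
have mem_s B x : x \in s B by rewrite mem_cat !mem_enum inE orbN.
have size_s B : size (s B) = #|T| by rewrite size_cat -!cardE cardsC.
have index_s B x : (index x (s B) < #|B|) = (x \in B).
  rewrite index_cat mem_enum -cardE; case: ifP => [xB | _]; last by rewrite ltnNge leq_addr.
  by rewrite cardE index_mem mem_enum.
have nth_s B x0 i : i < #|T| -> (nth x0 (s B) i \in B) = (i < #|B|).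
  by move=> lt_i; rewrite -index_s index_uniq ?size_s.
move=> eq_card.
have index_lt B x : index x (s B) < #|T| by rewrite -(size_s B) index_mem.
exists (fun x => nth x (s A') (index x (s A))).
  exists (fun y => nth y (s A) (index y (s A'))) => z.
    by rewrite index_uniq ?size_s // nth_index.
  by rewrite index_uniq ?size_s // nth_index.
by move=> x; rewrite nth_s // -eq_card index_s.
Qed.

Section IndependentSets.
Variables (T : finType) (e : rel T).
Implicit Types (S U B : {set T}) (x y w : T).

Definition nbhd (x : T) : {set T} := [set y | e x y].

Definition num_indep_in (U : {set T}) : nat :=
  #|[set S : {set T} | (S \subset U) && independent e S]|.

Lemma independentP S :
  reflect (forall x y, x \in S -> y \in S -> ~~ e x y) (independent e S).
Proof.
apply: (iffP forallP) => [indep x y xS yS | indep x].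
  by move: (indep x); rewrite xS => /forallP /(_ y); rewrite yS.
by apply/implyP => xS; apply/forallP => y; apply/implyP; apply: indep.
Qed.

Lemma not_independent_edge S :
  ~~ independent e S -> exists x y, [/\ x \in S, y \in S & e x y].
Proof.
case/forallPn => x; rewrite negb_imply => /andP[xS /forallPn[y]].
by rewrite negb_imply negbK => /andP[yS exy]; exists x, y.
Qed.

Lemma independentS S S' : S' \subset S -> independent e S -> independent e S'.
Proof.
move=> sub /independentP indep; apply/independentP => x y xS yS.
by apply: indep; apply: (subsetP sub).
Qed.

Lemma independent0 : independent e set0.
Proof. by apply/independentP => x y; rewrite inE. Qed.

Lemma num_indepE : num_indep e = num_indep_in setT.
Proof. by apply: eq_card => S; rewrite !inE subsetT. Qed.

Lemma num_indep_in_le U : num_indep_in U <= 2 ^ #|U|.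
Proof.
rewrite -card_powerset; apply: subset_leq_card; apply/subsetP => S.
by rewrite !inE => /andP[].
Qed.

Lemma num_indep_in_independent U : independent e U -> num_indep_in U = 2 ^ #|U|.
Proof.
move=> indepU; rewrite -card_powerset; apply: eq_card => S; rewrite !inE.
by case: (boolP (S \subset U)) => // /independentS; apply.
Qed.

Lemma card_indep_containing w :
  #|[set S : {set T} | independent e S && (w \in S)]| <= 2 ^ #|~: nbhd w|.
Proof.
rewrite -card_powerset; apply: subset_leq_card; apply/subsetP => S.
rewrite !inE => /andP[/independentP indep wS]; apply/subsetP => y yS.
by rewrite !inE; apply: indep.
Qed.

(* An independent set either avoids [B] or contains a vertex of [B]. *)
Lemma num_indep_le_split B :
  num_indep e <= num_indep_in (~: B) + \sum_(w in B) 2 ^ #|~: nbhd w|.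
Proof.
have sub : [set S : {set T} | independent e S] \subset
    [set S : {set T} | (S \subset ~: B) && independent e S] :|:
    \bigcup_(w in B) [set S : {set T} | independent e S && (w \in S)].
  apply/subsetP => S; rewrite !inE => indepS.
  have [_ | /subsetPn[w wS]] := boolP (S \subset ~: B); first by rewrite indepS.
  rewrite inE negbK => wB /=; apply/bigcupP; exists w => //.
  by rewrite inE indepS wS.
apply: leq_trans (subset_leq_card sub) _.
apply: leq_trans (leq_card_setU _ _) _; rewrite leq_add2l.
apply: leq_trans (card_bigcup_le _ _) _.
by apply: leq_sum => w _; apply: card_indep_containing.
Qed.

(* An independent subset of [U] meets the edge [xy] in at most one of three ways. *)
Lemma num_indep_in_edge U x y : x \in U -> y \in U -> e x y ->
  num_indep_in U <= 3 * num_indep_in (U :\ x :\ y).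
Proof.
move=> xU yU exy.
set A := [set S : {set T} | (S \subset U :\ x :\ y) && independent e S].
have add1 z S : z \in S -> S :\ z \in A -> S \in [set z |: S' | S' in A].
  by move=> zS SzA; apply/imsetP; exists (S :\ z); rewrite ?setD1K.
have sub : [set S : {set T} | (S \subset U) && independent e S] \subset
    A :|: [set x |: S | S in A] :|: [set y |: S | S in A].
  apply/subsetP => S; rewrite inE => /andP[SU indepS].
  have inA S' : S' \subset S -> x \notin S' -> y \notin S' -> S' \in A.
    move=> S'S xS' yS'; rewrite inE (independentS S'S indepS) andbT.
    apply/subsetP => z zS'; rewrite !inE (subsetP SU _ (subsetP S'S z zS')).
    by rewrite andbT; apply/andP; split; apply: contraTneq zS' => ->.
  have [xS | xS] := boolP (x \in S).
    have yS : y \notin S.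
      by apply: contraL exy => yS; move/independentP: indepS; apply.
    by rewrite !inE (add1 x) ?orbT // inA ?subD1set // !inE ?eqxx ?(negbTE yS) ?andbF.
  have [yS | yS] := boolP (y \in S).
    by rewrite !inE (add1 y) ?orbT // inA ?subD1set // !inE ?eqxx ?(negbTE xS) ?andbF.
  by rewrite !in_setU inA.
apply: leq_trans (subset_leq_card sub) _.
apply: leq_trans (leq_card_setU _ _) _.
rewrite /num_indep_in -/A (_ : 3 * _ = #|A| + #|A| + #|A|); last by lia.
apply: leq_add (leq_imset_card _ _).
by apply: leq_trans (leq_card_setU _ _) _; apply: leq_add (leq_imset_card _ _).
Qed.

Hypothesis e_irr : forall x, ~~ e x x.

Lemma card_setD2 U x y : x \in U -> y \in U -> e x y -> #|U| = #|U :\ x :\ y| + 2.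
Proof.
move=> xU yU exy; have neq_xy : x != y by apply: contraNneq (e_irr x) => {2}->.
by rewrite (cardsD1 x U) xU (cardsD1 y (U :\ x)) !inE eq_sym neq_xy yU; lia.
Qed.

Lemma num_indep_in_not_independent U :
  ~~ independent e U -> 4 * num_indep_in U <= 3 * 2 ^ #|U|.
Proof.
case/not_independent_edge => x [y [xU yU exy]].
have := num_indep_in_le (U :\ x :\ y); rewrite (card_setD2 xU yU exy) expnD.
by have := num_indep_in_edge xU yU exy; lia.
Qed.

(* Greedily remove the endpoints of [m] edges; each removal costs a factor 3/4. *)
Lemma num_indep_in_bound_or_cover m U :
  num_indep_in U * 4 ^ m <= 3 ^ m * 2 ^ #|U| \/
  exists2 C : {set T}, #|C| < 2 * m & independent e (U :\: C).
Proof.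
elim: m U => [|m IHm] U; first by left; rewrite !expn0 muln1 mul1n num_indep_in_le.
have [indepU | /not_independent_edge[x [y [xU yU exy]]]] := boolP (independent e U).
  by right; exists set0; rewrite ?cards0 ?setD0.
have [bound | [C card_C indepC]] := IHm (U :\ x :\ y).
  left; have := num_indep_in_edge xU yU exy.
  by rewrite (card_setD2 xU yU exy) !expnS expnD; nia.
right; exists ([set x; y] :|: C).
  by apply: leq_ltn_trans (leq_card_setU _ _) _; rewrite cards2; case: (x != y); lia.
by rewrite -!setDDl.
Qed.

End IndependentSets.

Definition indep_join (T : finType) (e : rel T) (B : {set T}) : Prop :=
  independent e (~: B) /\ forall v w, v \notin B -> w \in B -> e v w.

(* An independent set lies either inside [~: B] or inside [B]; only [set0] does both. *)
Lemma num_indep_join (T : finType) (e : rel T) (B : {set T}) : indep_join e B ->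
  num_indep e + 1 = 2 ^ #|~: B| + num_indep_in e B.
Proof.
move=> [indepBC join]; set inB := [set S : {set T} | (S \subset B) && independent e S].
have split : [set S : {set T} | independent e S] = powerset (~: B) :|: inB.
  apply/setP => S; rewrite !inE.
  have [sub | /subsetPn[w wS]] := boolP (S \subset ~: B); first exact: independentS sub _.
  rewrite inE negbK => wB /=; apply/idP/andP => [indepS | [] //]; split => //.
  apply/subsetP => v vS; apply: contraT => vB.
  by move/independentP: indepS => /(_ v w vS wS); rewrite join.
have meet : powerset (~: B) :&: inB = [set set0].
  apply/setP => S; rewrite !inE andbA -subsetI setIC setICr subset0.
  by case: eqP => [-> | //]; rewrite independent0.
by rewrite /num_indep split -card_powerset -(cards1 (set0 : {set T})) -meet cardsUI.
Qed.

Lemma nbhd_subset_eq (T : finType) (e : rel T) (d : nat) (B : {set T}) v :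
  min_degree_ge e d -> #|B| <= d -> nbhd e v \subset B -> nbhd e v = B.
Proof.
move=> deg_e card_B sub; apply/eqP; rewrite eqEcard sub.
exact: leq_trans card_B (deg_e v).
Qed.

Lemma indep_join_edgeE (T : finType) (e : rel T) (B : {set T}) :
  symmetric e -> indep_join e B -> independent e B ->
  forall x y, e x y = ((x \in B) != (y \in B)).
Proof.
move=> e_sym [/independentP indepBC join] /independentP indepB x y.
have [xB | xB] := boolP (x \in B); have [yB | yB] := boolP (y \in B) => /=.
- exact/negbTE/indepB.
- by rewrite e_sym join.
- exact: join.
- by apply/negbTE/indepBC; rewrite inE.
Qed.

Section CompleteBipartite.
Variables n d : nat.
Hypothesis le_dn : d <= n.

Definition Kbip_part : {set 'I_n} := [set i : 'I_n | i < d].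

Lemma KbipE x y : Kbip n d x y = ((x \in Kbip_part) != (y \in Kbip_part)).
Proof. by rewrite /Kbip !inE. Qed.

Lemma Kbip_simple : simple_graph (Kbip n d).
Proof. by split => [x y | x]; rewrite /Kbip ?eqxx // eq_sym. Qed.

Lemma card_Kbip_part : #|Kbip_part| = d.
Proof.
have -> : Kbip_part = [set widen_ord le_dn i | i in 'I_d].
  apply/setP => y; rewrite inE; apply/idP/imsetP => [lt_yd | [i _ ->]].
    by exists (Ordinal lt_yd); last apply: val_inj.
  exact: (ltn_ord i).
by rewrite card_imset ?card_ord // => i j /(congr1 val) /= /val_inj.
Qed.

Lemma card_Kbip_partC : #|~: Kbip_part| = n - d.
Proof. by have := cardsC Kbip_part; rewrite card_Kbip_part card_ord; lia. Qed.

Lemma Kbip_indep_join : indep_join (Kbip n d) Kbip_part.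
Proof.
split => [|v w]; last by rewrite KbipE => /negbTE -> ->.
by apply/independentP => x y; rewrite KbipE !inE => /negbTE -> /negbTE ->.
Qed.

Lemma independent_Kbip_part : independent (Kbip n d) Kbip_part.
Proof. by apply/independentP => x y; rewrite KbipE => -> ->. Qed.

Lemma num_indep_Kbip : num_indep (Kbip n d) + 1 = 2 ^ (n - d) + 2 ^ d.
Proof.
rewrite (num_indep_join Kbip_indep_join) card_Kbip_partC.
by rewrite num_indep_in_independent ?card_Kbip_part // independent_Kbip_part.
Qed.

Lemma Kbip_min_degree : d + d <= n -> min_degree_ge (Kbip n d) d.
Proof.
move=> le_ddn x; rewrite /degree -/(nbhd _ x).
have nbhdE y : (y \in nbhd (Kbip n d) x) = ((x \in Kbip_part) != (y \in Kbip_part)).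
  by rewrite inE KbipE.
have [xB | xB] := boolP (x \in Kbip_part).
  have -> : nbhd (Kbip n d) x = ~: Kbip_part.
    by apply/setP => y; rewrite nbhdE xB in_setC.
  by rewrite card_Kbip_partC; lia.
have -> : nbhd (Kbip n d) x = Kbip_part.
  by apply/setP => y; rewrite nbhdE (negbTE xB); case: (y \in _).
by rewrite card_Kbip_part.
Qed.

Lemma graph_iso_Kbip (e : rel 'I_n) (B : {set 'I_n}) : #|B| = d ->
  (forall x y, e x y = ((x \in B) != (y \in B))) -> graph_iso e (Kbip n d).
Proof.
move=> card_B eE; have [|f bij_f memf] := @card_eq_set_bij _ B Kbip_part.
  by rewrite card_B card_Kbip_part.
by exists f; split => // x y; rewrite eE KbipE !memf.
Qed.

End CompleteBipartite.

Lemma num_indep_le_heavy (T : finType) (e : rel T) (B : {set T}) k :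
  (forall w, w \in B -> k <= degree e w) ->
  num_indep e <= 2 ^ #|~: B| + #|B| * 2 ^ (#|T| - k).
Proof.
move=> heavy_B; apply: leq_trans (num_indep_le_split e B) _.
apply: leq_add (num_indep_in_le _ _) _.
rewrite -sum_nat_const; apply: leq_sum => w wB; apply: leq_pexp2l => //.
by have := cardsC (nbhd e w); have := heavy_B w wB; rewrite /degree -/(nbhd e w); lia.
Qed.

(* The exponent [3 * d.+1] is chosen so that [2 ^ d.+1 * 27 ^ d.+1 <= 64 ^ d.+1]. *)
Lemma lt_expn_of_cover_bound d n i : d <= n ->
  i * 4 ^ (3 * d.+1) <= 3 ^ (3 * d.+1) * 2 ^ n -> i < 2 ^ (n - d).
Proof.
move=> le_dn bound.
have pow : 2 ^ d.+1 * 3 ^ (3 * d.+1) <= 4 ^ (3 * d.+1).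
  by rewrite !expnM -expnMn leq_exp2r.
have : i * 2 ^ d.+1 * 3 ^ (3 * d.+1) <= 2 ^ n * 3 ^ (3 * d.+1) by nia.
have -> : 2 ^ n = 2 ^ (n - d) * 2 ^ d by rewrite -expnD subnK.
rewrite leq_pmul2r ?expn_gt0 // expnS mulnA leq_pmul2r ?expn_gt0 //.
by have := expn_gt0 2 (n - d); lia.
Qed.

Section SmallVertexCover.
Variables (T : finType) (e : rel T) (d c : nat) (C : {set T}).
Hypotheses (e_sym : symmetric e) (e_irr : forall x, ~~ e x x).
Hypothesis deg_e : min_degree_ge e d.
Hypotheses (card_C : #|C| < c) (cover_C : independent e (~: C)).
Hypothesis large_T : c * (c + d + 2) + 2 * d + 3 <= #|T|.

Let heavy : {set T} := [set w | c + d + 1 <= degree e w].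
Let typical : {set T} := [set u | (u \notin C) && (nbhd e u \subset heavy)].

Lemma nbhd_outside_cover u : u \notin C -> nbhd e u \subset C.
Proof.
move=> uC; apply/subsetP => y; rewrite inE => euy; apply: contraT => yC.
by move/independentP: cover_C => /(_ u y); rewrite !inE uC yC euy => /(_ isT isT).
Qed.

Lemma heavy_sub_cover : heavy \subset C.
Proof.
apply/subsetP => w; rewrite inE; apply: contraTT => wC; rewrite -ltnNge.
by have := subset_leq_card (nbhd_outside_cover wC); rewrite /degree -/(nbhd e w); lia.
Qed.

(* A vertex that is not typical lies in [C] or is adjacent to a light vertex of [C]. *)
Lemma card_atypical : #|~: typical| <= c * (c + d + 2).
Proof.
have sub : ~: typical \subset C :|: \bigcup_(w in C :\: heavy) nbhd e w.
  apply/subsetP => u; rewrite !inE negb_and negbK.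
  have [// | uC /= /subsetPn[y uy y_light]] := boolP (u \in C).
  apply/bigcupP; exists y; first by rewrite inE y_light (subsetP (nbhd_outside_cover uC)).
  by move: uy; rewrite !inE e_sym.
have light : \sum_(w in C :\: heavy) #|nbhd e w| <= #|C :\: heavy| * (c + d + 1).
  rewrite -sum_nat_const; apply: leq_sum => w; rewrite !inE -ltnNge => /andP[lt_w _].
  exact: ltnW.
apply: leq_trans (subset_leq_card sub) _; apply: leq_trans (leq_card_setU _ _) _.
apply: leq_trans (leq_add (ltnW card_C) (leq_trans (card_bigcup_le _ _) light)) _.
by have := subset_leq_card (subsetDl C heavy); nia.
Qed.

Lemma d_le_card_heavy : d <= #|heavy|.
Proof.
have [u] : exists u, u \in typical.
  by apply/card_gt0P; have := cardsC typical; have := card_atypical; lia.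
rewrite inE => /andP[_ /subset_leq_card]; exact: leq_trans (deg_e u).
Qed.

Lemma few_indep_of_card_heavy_gt : d < #|heavy| -> num_indep e < 2 ^ (#|T| - d).
Proof.
move=> lt_d_heavy; set k := #|T| - (c + d + 1).
have count : num_indep e <= 2 ^ #|~: heavy| + #|heavy| * 2 ^ k.
  by apply: num_indep_le_heavy => w; rewrite inE.
have pow_T : 2 ^ (#|T| - d) = 2 * (2 ^ c * 2 ^ k).
  by rewrite -expnD -expnS; congr (2 ^ _); lia.
have pow_out : 2 ^ #|~: heavy| <= 2 ^ c * 2 ^ k.
  by rewrite -expnD leq_pexp2l //; have := cardsC heavy; lia.
have : #|heavy| * 2 ^ k < 2 ^ c * 2 ^ k.
  rewrite ltn_pmul2r ?expn_gt0 //; apply: ltn_trans (ltn_expl c (ltnSn 1)).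
  exact: leq_ltn_trans (subset_leq_card heavy_sub_cover) card_C.
by rewrite pow_T; lia.
Qed.

Lemma join_or_few_indep_of_card_heavy_eq :
  #|heavy| = d -> num_indep e < 2 ^ (#|T| - d) \/ indep_join e heavy.
Proof.
move=> card_heavy.
have nbhd_heavy u : nbhd e u \subset heavy -> nbhd e u = heavy.
  by apply: nbhd_subset_eq deg_e _; rewrite card_heavy.
have [indep_out | /(num_indep_in_not_independent e_irr) few_out] :=
  boolP (independent e (~: heavy)).
  right; split => // v w v_out w_heavy.
  suff nbhd_v : nbhd e v = heavy by rewrite -nbhd_v inE in w_heavy.
  apply: nbhd_heavy; apply/subsetP => y; rewrite inE => evy; apply: contraT => y_out.
  by move/independentP: indep_out => /(_ v y); rewrite !in_setC v_out y_out evy => /(_ isT isT).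
left; set R := c * (c + d + 2).
have non_nbrs w : w \in heavy -> #|~: nbhd e w| <= R.
  move=> w_heavy; apply: leq_trans card_atypical; apply: subset_leq_card.
  rewrite setCS; apply/subsetP => u; rewrite inE => /andP[_ /nbhd_heavy nbhd_u].
  by move: w_heavy; rewrite -nbhd_u !inE e_sym.
have sum_le : \sum_(w in heavy) 2 ^ #|~: nbhd e w| <= d * 2 ^ R.
  rewrite -card_heavy -sum_nat_const; apply: leq_sum => w w_heavy.
  exact: leq_pexp2l (non_nbrs w w_heavy).
have card_out : #|~: heavy| = #|T| - d by have := cardsC heavy; lia.
have small_d : 4 * (d * 2 ^ R) < 2 ^ (#|T| - d).
  have -> : #|T| - d = (R + d + 2) + (#|T| - (R + 2 * d + 2)) by lia.
  rewrite !expnD (_ : 2 ^ 2 = 4) //.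
  have lt_d : d * 2 ^ R < 2 ^ R * 2 ^ d.
    by rewrite mulnC ltn_mul2l expn_gt0 ltn_expl.
  apply: (@leq_trans (4 * (2 ^ R * 2 ^ d))); first by rewrite ltn_mul2l lt_d.
  by rewrite [_ * 4]mulnC; apply: leq_pmulr; rewrite expn_gt0.
rewrite card_out in few_out; have count := num_indep_le_split e heavy.
by clear -few_out sum_le small_d count; lia.
Qed.

Lemma join_or_few_indep_of_cover :
  num_indep e < 2 ^ (#|T| - d) \/ exists2 B : {set T}, #|B| = d & indep_join e B.
Proof.
have [lt_d | eq_d] : d < #|heavy| \/ #|heavy| = d by have := d_le_card_heavy; lia.
  by left; apply: few_indep_of_card_heavy_gt.
by have [|join] := join_or_few_indep_of_card_heavy_eq eq_d; [left | right; exists heavy].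
Qed.

End SmallVertexCover.

Definition stability_bound (d : nat) : nat :=
  let c := 6 * d.+1 in c * (c + d + 2) + 2 * d + 3.

(* Either [3 * d.+1] edges can be removed one after another, or a vertex cover
   of size less than [6 * d.+1] exists. *)
Lemma join_or_few_indep (T : finType) (e : rel T) (d : nat) :
  simple_graph e -> min_degree_ge e d -> stability_bound d <= #|T| ->
  num_indep e < 2 ^ (#|T| - d) \/ exists2 B : {set T}, #|B| = d & indep_join e B.
Proof.
move=> [e_sym e_irr] deg_e large_T.
have [bound | [C card_C cover_C]] := num_indep_in_bound_or_cover e_irr (3 * d.+1) setT.
  left; rewrite num_indepE; rewrite cardsT in bound; apply: lt_expn_of_cover_bound bound.
  by move: large_T; rewrite /stability_bound; lia.
rewrite setTD in cover_C.
apply: (join_or_few_indep_of_cover (c := 6 * d.+1) e_sym e_irr deg_e _ cover_C large_T).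
by rewrite mulnA in card_C.
Qed.

Theorem mainTheorem4 (delta : nat) (hdelta : 0 < delta) :
  exists N : nat, forall n : nat, N <= n ->
    simple_graph (Kbip n delta) /\
    min_degree_ge (Kbip n delta) delta /\
    forall e : rel 'I_n, simple_graph e -> min_degree_ge e delta ->
      num_indep e <= num_indep (Kbip n delta) /\
      (num_indep e = num_indep (Kbip n delta) -> graph_iso e (Kbip n delta)).
Proof.
exists (stability_bound delta) => n large_n.
have le_ddn : delta + delta <= n by move: large_n; rewrite /stability_bound; lia.
have le_dn : delta <= n by lia.
split; first exact: Kbip_simple.
split; first exact: Kbip_min_degree.
move=> e simple_e deg_e; have count_K := num_indep_Kbip le_dn.
have pos_d : 1 < 2 ^ delta by rewrite -{1}(expn0 2) ltn_exp2l.
have large_I : stability_bound delta <= #|'I_n| by rewrite card_ord.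
have [|[B card_B join_B]] := join_or_few_indep simple_e deg_e large_I.
  by rewrite card_ord => few; split => [|eq_count]; lia.
have count_e := num_indep_join join_B.
have card_BC : #|~: B| = n - delta by have := cardsC B; rewrite card_B card_ord; lia.
have le_B := num_indep_in_le e B; rewrite card_B in le_B; rewrite card_BC in count_e.
split => [|eq_count]; first lia.
have [e_sym e_irr] := simple_e.
have indep_B : independent e B.
  by apply: contraT => /(num_indep_in_not_independent e_irr); rewrite card_B; lia.
exact: graph_iso_Kbip card_B (indep_join_edgeE e_sym join_B indep_B).
Qed.
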